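(* Fix $\rho\in(-1,1)$, real numbers $\mu_D$, $\sigma_D>0$, $\mu_L\ge0$, $\sigma_L>0$ and an integer $n\ge1$. Then the function $m\mapsto B_m(\rho)$ (with $B_m$ the function defined in the context, with lead-time forecast window $m$) is strictly decreasing on the positive integers $m\ge1$.
   Context: For fixed real parameters $\mu_D$, $\sigma_D>0$, $\mu_L\ge0$, $\sigma_L\ge0$ and integers $n,m\ge1$, define for $\rho\in(-1,1)$ $$B_m(\rho)=\frac{2\sigma_L^2}{n^2m^2}\left(m(1-\rho^n)+\frac{n(1+\rho)}{1-\rho}-\frac{(1+\rho^2)(1-\rho^n)}{(1-\rho)^2}\right)+\frac{2\sigma_L^2\mu_D^2}{\sigma_D^2 m^2}+\left(\frac{2\mu_L^2}{n^2}+\frac{2\mu_L}{n}\right)(1-\rho^n)+1 .$$ (This is the bullwhip measure $\operatorname{Var}q_t/\operatorname{Var}D_t$ for AR(1) demand with autocorrelation $\rho$, mean $\mu_D$ and variance $\sigma_D^2$, i.i.d. lead times with mean $\mu_L$ and variance $\sigma_L^2$, moving-average demand forecast over $n$ periods and moving-average lead-time forecast over $m$ periods, under the order-up-to policy.) *)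

From Stdlib Require Import Reals Lra Lia.
Open Scope R_scope.

(* Bullwhip measure B_m(rho) for AR(1) demand, MA(n) demand forecast and
   MA(m) lead-time forecast, exactly as in the paper's context. *)
Definition bullwhipB (muD sigmaD muL sigmaL : R) (n m : nat) (rho : R) : R :=
  let nR := INR n in
  let mR := INR m in
  2 * sigmaL ^ 2 / (nR ^ 2 * mR ^ 2) *
    (mR * (1 - rho ^ n) + nR * (1 + rho) / (1 - rho)
     - (1 + rho ^ 2) * (1 - rho ^ n) / (1 - rho) ^ 2)
  + 2 * sigmaL ^ 2 * muD ^ 2 / (sigmaD ^ 2 * mR ^ 2)
  + (2 * muL ^ 2 / nR ^ 2 + 2 * muL / nR) * (1 - rho ^ n)
  + 1.

(** Writing [x = 1/m], the bullwhip measure is [B = c (a x + h x^2) + d x^2 + const]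
    with [c > 0], [d >= 0], [a = 1 - rho^n > 0] and [h] the curvature term below.
    For [1 <= m1 < m2] we have [x2 < x1 <= 1] and [x2 <= 1/2], so
    [a x1 + h x1^2 - (a x2 + h x2^2) = (x1 - x2) (a + h (x1 + x2))] is positive as
    soon as [2 a + 3 h > 0].  Multiplying by [(1 - rho)^2], the latter reads
    [(1 - rho^n) (1 + 4 rho + rho^2) < 3 n (1 - rho^2)], which follows from the
    Bernoulli-type bound [1 - rho^n <= n (1 - rho)]. *)
From Stdlib Require Import Reals Lra Lia.
Open Scope R_scope.

Lemma pow_le_1_abs (r : R) (n : nat) : Rabs r <= 1 -> r ^ n <= 1.
Proof.
  intros Hr.
  apply (Rle_trans _ (Rabs (r ^ n))); [apply Rle_abs|].
  rewrite <- RPow_abs, <- (pow1 n).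
  apply pow_incr; split; [apply Rabs_pos | exact Hr].
Qed.

Lemma one_sub_pow_le (r : R) (n : nat) : -1 <= r <= 1 -> 1 - r ^ n <= INR n * (1 - r).
Proof.
  intros Hr1.
  assert (Hr : Rabs r <= 1) by (apply Rabs_le; lra).
  induction n as [|k IH]; [simpl; lra|].
  rewrite S_INR; simpl.
  pose proof (pow_le_1_abs r k Hr).
  (* [1 - r^(k+1) = (1 - r) + r (1 - r^k)] and [r (1 - r^k) <= 1 - r^k] *)
  nra.
Qed.

Lemma one_sub_pow_pos (r : R) (n : nat) : Rabs r < 1 -> (1 <= n)%nat -> 0 < 1 - r ^ n.
Proof.
  intros Hr Hn.
  assert (Habs : Rabs (r ^ n) < 1).
  { rewrite <- RPow_abs. apply pow_lt_1_compat; [split; [apply Rabs_pos | exact Hr] | lia]. }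
  pose proof (Rle_abs (r ^ n)). lra.
Qed.

Definition bullwhip_curvature (n : nat) (rho : R) : R :=
  INR n * (1 + rho) / (1 - rho) - (1 + rho ^ 2) * (1 - rho ^ n) / (1 - rho) ^ 2.

Lemma bullwhipB_inv_m (muD sigmaD muL sigmaL rho : R) (n m : nat) :
  rho < 1 -> 0 < sigmaD -> (1 <= n)%nat -> (1 <= m)%nat ->
  bullwhipB muD sigmaD muL sigmaL n m rho =
  2 * sigmaL ^ 2 / INR n ^ 2 *
    ((1 - rho ^ n) * / INR m + bullwhip_curvature n rho * (/ INR m) ^ 2)
  + 2 * sigmaL ^ 2 * muD ^ 2 / sigmaD ^ 2 * (/ INR m) ^ 2
  + (2 * muL ^ 2 / INR n ^ 2 + 2 * muL / INR n) * (1 - rho ^ n) + 1.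
Proof.
  intros Hrho HsD Hn Hm.
  assert (INR n <> 0) by (apply not_0_INR; lia).
  assert (INR m <> 0) by (apply not_0_INR; lia).
  unfold bullwhipB, bullwhip_curvature. field. repeat split; lra.
Qed.

Lemma bullwhip_curvature_bound (rho : R) (n : nat) :
  -1 < rho < 1 -> (1 <= n)%nat ->
  0 < 2 * (1 - rho ^ n) + 3 * bullwhip_curvature n rho.
Proof.
  intros Hrho Hn.
  assert (Habs : Rabs rho < 1) by (apply Rabs_def1; lra).
  assert (Ha : 0 < 1 - rho ^ n) by (apply one_sub_pow_pos; assumption).
  assert (Hb : 1 - rho ^ n <= INR n * (1 - rho)) by (apply one_sub_pow_le; lra).
  assert (Hscaled : (1 - rho) ^ 2 * (2 * (1 - rho ^ n) + 3 * bullwhip_curvature n rho)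
                    = 3 * INR n * (1 - rho ^ 2) - (1 - rho ^ n) * (1 + 4 * rho + rho ^ 2)).
  { unfold bullwhip_curvature. field. lra. }
  assert (Hpos : (1 - rho ^ n) * (1 + 4 * rho + rho ^ 2) < 3 * INR n * (1 - rho ^ 2)).
  { destruct (Rle_dec (1 + 4 * rho + rho ^ 2) 0) as [Hs | Hs].
    - assert ((1 - rho ^ n) * (1 + 4 * rho + rho ^ 2) <= 0) by nra. nra.
    - assert (Hbs : (1 - rho ^ n) * (1 + 4 * rho + rho ^ 2)
                    <= INR n * (1 - rho) * (1 + 4 * rho + rho ^ 2))
        by (apply Rmult_le_compat_r; lra).
      (* [1 + 4 rho + rho^2 < 3 (1 + rho)] because [rho^2 + rho - 2 < 0] on [(-1, 1)] *)
      assert (Hs3 : INR n * (1 - rho) * (1 + 4 * rho + rho ^ 2)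
                    < INR n * (1 - rho) * (3 * (1 + rho)))
        by (apply Rmult_lt_compat_l; nra).
      nra. }
  assert (H1rho : 0 < (1 - rho) ^ 2) by nra.
  nra.
Qed.

Lemma quadratic_increment_pos (a h x y : R) :
  0 < a -> 0 < 2 * a + 3 * h -> 0 < y < x -> x <= 1 -> y <= / 2 ->
  a * y + h * y ^ 2 < a * x + h * x ^ 2.
Proof.
  intros Ha Hah Hxy Hx Hy.
  assert (Hfactor : a + h * (x + y) > 0).
  { destruct (Rle_dec 0 h); nra. }
  nra.
Qed.

Lemma inv_INR_lt_le (m1 m2 : nat) : (1 <= m1)%nat -> (m1 < m2)%nat ->
  0 < / INR m2 < / INR m1 /\ / INR m1 <= 1 /\ / INR m2 <= / 2.
Proof.
  intros Hm1 Hm12.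
  assert (H1 : 1 <= INR m1) by (apply (le_INR 1); lia).
  assert (H2 : INR m1 + 1 <= INR m2) by (rewrite <- S_INR; apply le_INR; lia).
  repeat split.
  - apply Rinv_0_lt_compat; lra.
  - apply Rinv_1_lt_contravar; lra.
  - rewrite <- Rinv_1; apply Rinv_le_contravar; lra.
  - apply Rinv_le_contravar; lra.
Qed.

Theorem mainTheorem9 :
  forall (rho muD sigmaD muL sigmaL : R) (n : nat),
    -1 < rho < 1 -> 0 < sigmaD -> 0 <= muL -> 0 < sigmaL -> (1 <= n)%nat ->
    forall m1 m2 : nat, (1 <= m1)%nat -> (m1 < m2)%nat ->
      bullwhipB muD sigmaD muL sigmaL n m2 rho
        < bullwhipB muD sigmaD muL sigmaL n m1 rho.
Proof.
  intros rho muD sigmaD muL sigmaL n Hrho HsD HmuL HsL Hn m1 m2 Hm1 Hm12.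
  rewrite !(bullwhipB_inv_m muD sigmaD muL sigmaL rho n) by (lra || lia).
  destruct (inv_INR_lt_le m1 m2 Hm1 Hm12) as [Hx [Hx1 Hy2]].
  set (x := / INR m1) in *; set (y := / INR m2) in *.
  assert (Hquad : (1 - rho ^ n) * y + bullwhip_curvature n rho * y ^ 2
                  < (1 - rho ^ n) * x + bullwhip_curvature n rho * x ^ 2).
  { apply quadratic_increment_pos; try lra.
    - apply one_sub_pow_pos; [apply Rabs_def1 | ]; lra || lia.
    - apply bullwhip_curvature_bound; assumption. }
  assert (Hc : 0 < 2 * sigmaL ^ 2 / INR n ^ 2).
  { assert (0 < INR n) by (apply lt_0_INR; lia). apply Rdiv_lt_0_compat; nra. }
  assert (Hd : 0 <= 2 * sigmaL ^ 2 * muD ^ 2 / sigmaD ^ 2).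
  { apply Rmult_le_pos; [nra | apply Rlt_le, Rinv_0_lt_compat; nra]. }
  assert (Hsq : y ^ 2 <= x ^ 2) by nra.
  nra.
Qed.
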